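(* Consider the forward SDE $\mathrm{d}\mathbf{x}_t=\alpha(t)\mathbf{x}_t\,\mathrm{d}t+g(t)\,\mathrm{d}\mathbf{w}_t$, $\mathbf{x}_0\sim p_{\mathrm{data}}$, of Variance Preserving or Variance Exploding type, with associated noise density $p_{\mathrm{noise}}$, marginal density $p(\mathbf{x},t)$ and conditional density $p(\mathbf{x},t\mid\mathbf{x}_0)$. For a parametric family $\{\mathbf{s}_{\boldsymbol\theta}\}$ define $$I(\mathbf{s},T)=\frac12\int_0^T g^2(t)\,\mathbb{E}\big[\|\mathbf{s}(\mathbf{x}_t,t)-\nabla\log p(\mathbf{x}_t,t\mid\mathbf{x}_0)\|^2\big]\mathrm{d}t,\quad K(T)=I(\nabla\log p,T),\quad\mathcal{G}(\mathbf{s},T)=I(\mathbf{s},T)-K(T),$$ and let $\widehat{\mathbf{s}}_{\boldsymbol\theta}$ denote, for each $T$, the optimal score (parameters minimizing $I(\mathbf{s}_{\boldsymbol\theta},T)$). Let $\{\nu_{\boldsymbol\phi}\}$ be a parametric family of densities containing $p_{\mathrm{noise}}$, and for each $T$ let $\boldsymbol\phi^\star=\boldsymbol\phi^\star(T)$ minimize $\mathrm{KL}(p(\mathbf{x},T)\,\|\,\nu_{\boldsymbol\phi})$. Define $$\mathcal{L}_{\mathrm{ELBO}}(\mathbf{s},T)=\mathbb{E}_{p_{\mathrm{data}}}[\log p_{\mathrm{data}}]-\mathcal{G}(\mathbf{s},T)-\mathrm{KL}\big(p(\mathbf{x},T)\,\|\,p_{\mathrm{noise}}\big),$$ $$\mathcal{L}^{\boldsymbol\phi}_{\mathrm{ELBO}}(\mathbf{s},T)=\mathbb{E}_{p_{\mathrm{data}}}[\log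 p_{\mathrm{data}}]-\mathcal{G}(\mathbf{s},T)-\mathrm{KL}\big(p(\mathbf{x},T)\,\|\,\nu_{\boldsymbol\phi}\big).$$ Let $T^\star$ be a diffusion time maximizing $T\mapsto\mathcal{L}_{\mathrm{ELBO}}(\widehat{\mathbf{s}}_{\boldsymbol\theta},T)$. Then there exists at least one diffusion time $\tau\in[0,T^\star]$ such that $\mathcal{L}^{\boldsymbol\phi^\star}_{\mathrm{ELBO}}(\widehat{\mathbf{s}}_{\boldsymbol\theta},\tau)\ge\mathcal{L}_{\mathrm{ELBO}}(\widehat{\mathbf{s}}_{\boldsymbol\theta},T^\star)$.
   Context: Variance Preserving: $\alpha=-\tfrac12\beta$, $g=\sqrt\beta$, $\beta(t)=\beta_0+(\beta_1-\beta_0)t$, $p_{\mathrm{noise}}=\mathcal{N}(\mathbf{0},\mathbf{I})$. Variance Exploding: $\alpha=0$, $g=\sqrt{\mathrm{d}\sigma^2/\mathrm{d}t}$, $\sigma^2(t)=(\sigma_{\max}^2/\sigma_{\min}^2)^t$, $p_{\mathrm{noise}}=\mathcal{N}(\mathbf{0},(\sigma^2(T)-\sigma^2(0))\mathbf{I})$. Expectations are over $\mathbf{x}_0\sim p_{\mathrm{data}}$ and the forward process; minimizers are assumed to exist. *)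

From HB Require Import structures.
From mathcomp Require Import all_boot all_order all_algebra.
From mathcomp Require Import all_classical all_reals all_analysis.
Set Implicit Arguments. Unset Strict Implicit. Unset Printing Implicit Defensive.
Import Order.TTheory GRing.Theory Num.Theory.
Import numFieldNormedType.Exports.
Local Open Scope classical_set_scope.
Local Open Scope ring_scope.

Section Diffusion.
Variables (R : realType) (d : nat).

Definition Rd : measurableType (sigma_display (@open 'rV[R]_d)) :=
  g_sigma_algebraType (@open 'rV[R]_d).

(* leb is Lebesgue measure on R^d: a Borel measure giving every closed box
   its volume (this characterizes Lebesgue measure on the Borel sets). *)
Definition is_lebesgue (leb : set Rd -> \bar R) : Prop :=
  forall a b : 'rV[R]_d, (forall i, a 0 i <= b 0 i) ->
    leb [set x : Rd | forall i, a 0 i <= (x : 'rV[R]_d) 0 i <= b 0 i]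
    = (\prod_(i < d) (b 0 i - a 0 i))%:E.

Variable leb : {measure set Rd -> \bar R}.

Definition sqn (x : 'rV[R]_d) : R := \sum_(i < d) (x 0 i) ^+ 2.

Definition grad (f : 'rV[R]_d -> R) (x : 'rV[R]_d) : 'rV[R]_d :=
  \row_(i < d) derive f x (delta_mx 0 i).

Definition is_density (p : 'rV[R]_d -> R) : Prop :=
  [/\ measurable_fun [set: Rd] (p : Rd -> R), (forall x, 0 <= p x) &
      (\int[leb]_x (p x)%:E = 1)%E].

Definition gauss (mu : 'rV[R]_d) (v : R) (x : 'rV[R]_d) : R :=
  (2 * pi * v) `^ (- (d%:R / 2)) * expR (- sqn (x - mu) / (2 * v)).

Inductive SDE := VP of R & R (* beta_0, beta_1 *)
               | VE of R & R (* sigma_min, sigma_max *).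

Definition sde_ok (s : SDE) : Prop :=
  match s with
  | VP b0 b1 => 0 < b0 /\ 0 < b1
  | VE smin smax => 0 < smin /\ smin < smax
  end.

Definition beta (b0 b1 t : R) : R := b0 + (b1 - b0) * t.
Definition sigma2 (smin smax t : R) : R := (smax ^+ 2 / smin ^+ 2) `^ t.

Definition sde_alpha (s : SDE) (t : R) : R :=
  match s with
  | VP b0 b1 => - (1 / 2) * beta b0 b1 t
  | VE _ _ => 0
  end.

Definition sde_g (s : SDE) (t : R) : R :=
  match s with
  | VP b0 b1 => Num.sqrt (beta b0 b1 t)
  | VE smin smax => Num.sqrt (derive1 (sigma2 smin smax) t)
  end.

Definition pnoise (s : SDE) (T : R) : 'rV[R]_d -> R :=
  match s with
  | VP _ _ => gauss 0 1
  | VE smin smax => gauss 0 (sigma2 smin smax T - sigma2 smin smax 0)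
  end.

(* Transition kernel of the linear SDE dx = alpha x dt + g dw:
   x_t | x_0 ~ N(m(t) x_0, v(t) I) with m(t) = exp(int_0^t alpha),
   v(t) = int_0^t (m(t)/m(u))^2 g(u)^2 du. *)
Definition sde_m (s : SDE) (t : R) : R :=
  expR (Rintegral lebesgue_measure `[0, t] (sde_alpha s)).

Definition sde_v (s : SDE) (t : R) : R :=
  Rintegral lebesgue_measure `[0, t]
    (fun u => (sde_m s t / sde_m s u) ^+ 2 * (sde_g s u) ^+ 2).

Definition pcond (s : SDE) (x : 'rV[R]_d) (t : R) (x0 : 'rV[R]_d) : R :=
  gauss (sde_m s t *: x0) (sde_v s t) x.

Variable pdata : 'rV[R]_d -> R.

Definition pmarg (s : SDE) (x : 'rV[R]_d) (t : R) : R :=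
  if t == 0 then pdata x
  else Rintegral leb [set: Rd] (fun x0 : Rd => pdata x0 * pcond s x t x0).

Definition score_err (s : SDE) (sc : 'rV[R]_d -> R -> 'rV[R]_d) (t : R)
  : \bar R :=
  (\int[leb]_x0 ((pdata x0)%:E *
     \int[leb]_x
        (pcond s x t x0 *
         sqn (sc x t - grad (fun y => ln (pcond s y t x0)) x))%:E))%E.

Definition Iloss (s : SDE) (sc : 'rV[R]_d -> R -> 'rV[R]_d) (T : R) : \bar R :=
  ((1 / 2)%:E * \int[lebesgue_measure]_(t in `[0%R, T])
      ((sde_g s t ^+ 2)%:E * score_err s sc t))%E.

Definition true_score (s : SDE) : 'rV[R]_d -> R -> 'rV[R]_d :=
  fun x t => grad (fun y => ln (pmarg s y t)) x.

Definition Kloss (s : SDE) (T : R) : \bar R := Iloss s (true_score s) T.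
Definition Gap (s : SDE) (sc : 'rV[R]_d -> R -> 'rV[R]_d) (T : R) : \bar R :=
  (Iloss s sc T - Kloss s T)%E.

Definition KL (p q : 'rV[R]_d -> R) : \bar R :=
  if `[< {ae leb, forall x : Rd, q x = 0 -> p x = 0} >]
  then (\int[leb]_x (p x * ln (p x / q x))%:E)%E
  else +oo%E.

Definition neg_entropy : \bar R :=
  (\int[leb]_x (pdata x * ln (pdata x))%:E)%E.

Definition ELBO (s : SDE) (sc : 'rV[R]_d -> R -> 'rV[R]_d) (T : R) : \bar R :=
  (neg_entropy - Gap s sc T - KL (pmarg s ^~ T) (pnoise s T))%E.

Definition ELBO_nu (s : SDE) (nu : 'rV[R]_d -> R)
  (sc : 'rV[R]_d -> R -> 'rV[R]_d) (T : R) : \bar R :=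
  (neg_entropy - Gap s sc T - KL (pmarg s ^~ T) nu)%E.

End Diffusion.

From HB Require Import structures.
From mathcomp Require Import all_boot all_order all_algebra.
From mathcomp Require Import all_classical all_reals all_analysis.
Import Order.TTheory GRing.Theory Num.Theory.
Local Open Scope ring_scope.

(* Take tau = Tstar. At a fixed diffusion time the two ELBOs differ only in their
   KL term, and since p_noise belongs to the family {nu_phi}, the KL-optimal
   nu_phi* is at least as close to p(., Tstar) as p_noise is. *)

Section ELBOComparison.
Variables (R : realType) (d : nat) (leb : {measure set (Rd R d) -> \bar R}).
Variables (pdata : 'rV[R]_d -> R) (sde : SDE R).

Lemma ELBO_le_ELBO_nu (nu : 'rV[R]_d -> R) (sc : 'rV[R]_d -> R -> 'rV[R]_d)
    (T : R) :
  (KL leb (pmarg leb pdata sde ^~ T) nu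
   <= KL leb (pmarg leb pdata sde ^~ T) (pnoise sde T))%E ->
  (ELBO leb pdata sde sc T <= ELBO_nu leb pdata sde nu sc T)%E.
Proof. by move=> KL_le; apply: leeB. Qed.

Lemma KL_argmin_le_member (Phi : Type) (nu : Phi -> 'rV[R]_d -> R)
    (phistar : Phi) (p q : 'rV[R]_d -> R) :
  (forall phi, (KL leb p (nu phistar) <= KL leb p (nu phi))%E) ->
  (exists phi, nu phi = q) ->
  (KL leb p (nu phistar) <= KL leb p q)%E.
Proof. by move=> KL_min [phi <-]. Qed.

End ELBOComparison.

Theorem proposition4 (R : realType) (d : nat)
  (leb : {measure set (Rd R d) -> \bar R}) (sde : SDE R)
  (pdata : 'rV[R]_d -> R)
  (Theta Phi : Type) (s : Theta -> 'rV[R]_d -> R -> 'rV[R]_d)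
  (nu : Phi -> 'rV[R]_d -> R)
  (thetahat : R -> Theta) (phistar : R -> Phi) (Tstar : R) :
  is_lebesgue leb ->
  sde_ok sde ->
  is_density leb pdata ->
  (forall phi, is_density leb (nu phi)) ->
  (forall T, 0 < T -> exists phi, nu phi = @pnoise R d sde T) ->
  (forall T theta, 0 < T ->
     (Iloss leb pdata sde (s (thetahat T)) T <= Iloss leb pdata sde (s theta) T)%E) ->
  (forall T phi, 0 < T ->
     (KL leb (pmarg leb pdata sde ^~ T) (nu (phistar T))
      <= KL leb (pmarg leb pdata sde ^~ T) (nu phi))%E) ->
  0 < Tstar ->
  (forall T, 0 < T ->
     (ELBO leb pdata sde (s (thetahat T)) T
      <= ELBO leb pdata sde (s (thetahat Tstar)) Tstar)%E) ->
  exists tau, 0 <= tau <= Tstar /\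
    (ELBO leb pdata sde (s (thetahat Tstar)) Tstar
     <= ELBO_nu leb pdata sde (nu (phistar tau)) (s (thetahat tau)) tau)%E.
Proof.
move=> _ _ _ _ noise_in_family _ phistar_min Tstar_gt0 _.
exists Tstar; split; first by rewrite lexx andbT ltW.
apply: ELBO_le_ELBO_nu; apply: KL_argmin_le_member.
- by move=> phi; exact: phistar_min.
- exact: noise_in_family.
Qed.
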